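(* For every strategy profile $s$ with $S_0(s)\vee S_1(s)$: if $\mathsf{SPE}(s)$ then $\mathsf{SAcBes}(s)\vee\mathsf{SBcAes}(s)$.
   Context: Let $P=\{A,B\}$ and $\mathrm{Choice}=\{d,r\}$; a payoff function is $f:P\to\mathbb{R}$. Strategy profiles are elements of the final coalgebra of $X\mapsto\mathbb{R}^P+P\times\mathrm{Choice}\times X\times X$ (finite or infinite trees $\langle f\rangle$ or $\langle p,c,s_d,s_r\rangle$, equality being bisimilarity). The payoff $\widehat{s}$ is the partial function given by $\widehat{\langle f\rangle}=f$, $\widehat{\langle p,d,s_d,s_r\rangle}=\widehat{s_d}$, $\widehat{\langle p,r,s_d,s_r\rangle}=\widehat{s_r}$. Convergence $\downarrow$: least predicate with $\downarrow(s)$ iff $s=\langle f\rangle$, or $s=\langle p,d,s_d,s_r\rangle\wedge\downarrow(s_d)$, or $s=\langle p,r,s_d,s_r\rangle\wedge\downarrow(s_r)$. Strong convergence $\Downarrow$: greatest predicate with $\Downarrow(s)$ iff $s=\langle f\rangle$, or $s=\langle p,c,s_d,s_r\rangle$ with $\downarrow(s),\Downarrow(s_d),\Downarrow(s_r)$. For a predicate $\Phi$, $\Box\Phi$ is the greatest predicate such that $\Box\Phi(s)$ iff $\Phi(s)$ and, whenever $s=\langle p,c,s_d,s_r\rangle$, $\Box\Phi(s_d)$ and $\Box\Phi(s_r)$. $\mathsf{PE}(s)$ holds iff $\Downarrow(s)$ and (if $s=\langle p,d,s_d,s_r\rangle$ then $\widehat{s_d}(p)\ge\widehat{s_r}(p)$)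 and (if $s=\langle p,r,s_d,s_r\rangle$ then $\widehat{s_r}(p)\ge\widehat{s_d}(p)$); $\mathsf{SPE}=\Box\,\mathsf{PE}$. Let $f_{0,1}=(A\mapsto0,B\mapsto1)$, $f_{1,0}=(A\mapsto1,B\mapsto0)$. $S_0,S_1$ are the greatest predicates with $S_0(s)$ iff $s=\langle A,c,\langle f_{0,1}\rangle,s'\rangle$ with $S_1(s')$, and $S_1(s)$ iff $s=\langle B,c,\langle f_{1,0}\rangle,s'\rangle$ with $S_0(s')$. $\mathsf{AcBes}$ is the least predicate such that $\mathsf{AcBes}(s)$ holds iff: whenever $s=\langle p,c,\langle f\rangle,s'\rangle$, then ($p=A$, $f=f_{0,1}$, $c=r$, $\mathsf{AcBes}(s')$) or ($p=B$, $f=f_{1,0}$, and ($c=d$ or $\mathsf{AcBes}(s')$)). Symmetrically $\mathsf{BcAes}$ is the least predicate such that $\mathsf{BcAes}(s)$ holds iff: whenever $s=\langle p,c,\langle f\rangle,s'\rangle$, then ($p=B$, $f=f_{1,0}$, $c=r$, $\mathsf{BcAes}(s')$) or ($p=A$, $f=f_{0,1}$, and ($c=d$ or $\mathsf{BcAes}(s')$)). $\mathsf{SAcBes}=\Box\,\mathsf{AcBes}$ and $\mathsf{SBcAes}=\Box\,\mathsf{BcAes}$. *)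

From Stdlib Require Import Reals.
Open Scope R_scope.

Inductive Agent : Type := A | B.
Inductive Choice : Type := d | r.

(* Final coalgebra of X |-> R^P + P x Choice x X x X. *)
CoInductive Strat : Type :=
| Leaf (f : Agent -> R)
| Node (p : Agent) (c : Choice) (sd sr : Strat).

(* The partial payoff function \hat{s}, as a (functional) relation:
   Payoff s f  means  \hat{s} is defined and equals f. *)
Inductive Payoff : Strat -> (Agent -> R) -> Prop :=
| Payoff_leaf f : Payoff (Leaf f) f
| Payoff_d p sd sr f : Payoff sd f -> Payoff (Node p d sd sr) f
| Payoff_r p sd sr f : Payoff sr f -> Payoff (Node p r sd sr) f.

Inductive Conv : Strat -> Prop :=
| Conv_leaf f : Conv (Leaf f)
| Conv_d p sd sr : Conv sd -> Conv (Node p d sd sr)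
| Conv_r p sd sr : Conv sr -> Conv (Node p r sd sr).

CoInductive SConv : Strat -> Prop :=
| SConv_leaf f : SConv (Leaf f)
| SConv_node p c sd sr :
    Conv (Node p c sd sr) -> SConv sd -> SConv sr -> SConv (Node p c sd sr).

CoInductive Box (Phi : Strat -> Prop) : Strat -> Prop :=
| Box_leaf f : Phi (Leaf f) -> Box Phi (Leaf f)
| Box_node p c sd sr :
    Phi (Node p c sd sr) -> Box Phi sd -> Box Phi sr -> Box Phi (Node p c sd sr).

Definition PE (s : Strat) : Prop :=
  SConv s /\
  (forall p sd sr, s = Node p d sd sr ->
     forall fd fr, Payoff sd fd -> Payoff sr fr -> fd p >= fr p) /\
  (forall p sd sr, s = Node p r sd sr ->
     forall fd fr, Payoff sd fd -> Payoff sr fr -> fr p >= fd p).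

Definition SPE : Strat -> Prop := Box PE.

Definition f01 : Agent -> R := fun a => match a with A => 0 | B => 1 end.
Definition f10 : Agent -> R := fun a => match a with A => 1 | B => 0 end.

CoInductive S0 : Strat -> Prop :=
| S0_intro c s' : S1 s' -> S0 (Node A c (Leaf f01) s')
with S1 : Strat -> Prop :=
| S1_intro c s' : S0 s' -> S1 (Node B c (Leaf f10) s').

Inductive AcBes : Strat -> Prop :=
| AcBes_other s : (forall p c f s', s <> Node p c (Leaf f) s') -> AcBes s
| AcBes_A s' : AcBes s' -> AcBes (Node A r (Leaf f01) s')
| AcBes_Bd s' : AcBes (Node B d (Leaf f10) s')
| AcBes_Bc c s' : AcBes s' -> AcBes (Node B c (Leaf f10) s').

Inductive BcAes : Strat -> Prop :=
| BcAes_other s : (forall p c f s', s <> Node p c (Leaf f) s') -> BcAes s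
| BcAes_B s' : BcAes s' -> BcAes (Node B r (Leaf f10) s')
| BcAes_Ad s' : BcAes (Node A d (Leaf f01) s')
| BcAes_Ac c s' : BcAes s' -> BcAes (Node A c (Leaf f01) s').

Definition SAcBes : Strat -> Prop := Box AcBes.
Definition SBcAes : Strat -> Prop := Box BcAes.

(* On an S_0/S_1 profile each node lets its player either stop, which gives
   the stopper 0 and the other player 1, or continue down the spine; hence every
   payoff of such a profile takes values in {0,1}.  If a player a stops at some
   node of a subgame perfect profile, a gets 0 there, and subgame perfection
   propagates "a gets 0" down the spine: where a stops again, the continuation
   cannot give a more than 0, and where the mover continues, the payoff is
   unchanged.  So no later node is a stop of the other player.  As any two nodes
   of the spine are comparable, at most one player ever stops; the other one
   always continues, and convergence then yields AcBes resp. BcAes at every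
   subprofile. *)

From Stdlib Require Import Reals Lra Classical.
Open Scope R_scope.

Definition Comb (s : Strat) : Prop := S0 s \/ S1 s.

Definition stop_payoff (p : Agent) : Agent -> R :=
  match p with A => f01 | B => f10 end.

Definition StopsAt (a : Agent) (t : Strat) : Prop :=
  match t with Node p d _ _ => p = a | _ => False end.

Definition Continues (a : Agent) : Strat -> Prop :=
  match a with A => AcBes | B => BcAes end.

Definition Loses (a : Agent) (t : Strat) : Prop :=
  exists f, Payoff t f /\ f a = 0.

Inductive OnSpine (t : Strat) : Strat -> Prop :=
| OnSpine_refl : OnSpine t t
| OnSpine_node p c sd sr : OnSpine t sr -> OnSpine t (Node p c sd sr).

Lemma Box_coind (Phi I : Strat -> Prop) :
  (forall t, I t -> Phi t) ->
  (forall p c sd sr, I (Node p c sd sr) -> I sd /\ I sr) ->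
  forall t, I t -> Box Phi t.
Proof.
  intros HPhi Hstep. cofix CIH. intros [f|p c sd sr] Ht.
  - constructor; auto.
  - destruct (Hstep _ _ _ _ Ht). constructor; auto.
Qed.

Lemma SPE_SConv s : SPE s -> SConv s.
Proof. destruct 1 as [f [H _]|p c sd sr [H _] _ _]; exact H. Qed.

Lemma SPE_node_r p c sd sr : SPE (Node p c sd sr) -> SPE sr.
Proof. intros H; inversion H; assumption. Qed.

Lemma conv_payoff s : Conv s -> exists f, Payoff s f.
Proof.
  induction 1 as [f| p sd sr _ [f Hf] | p sd sr _ [f Hf]]; eexists; constructor; eauto.
Qed.

Lemma stop_payoff_eq0 p a : stop_payoff p a = 0 -> p = a.
Proof. destruct p, a; unfold stop_payoff, f01, f10; simpl; auto; lra. Qed.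

Lemma stop_payoff_self a : stop_payoff a a = 0.
Proof. destruct a; reflexivity. Qed.

Lemma stop_payoff_ge0 p a : 0 <= stop_payoff p a.
Proof. destruct p, a; unfold stop_payoff, f01, f10; simpl; lra. Qed.

Lemma Comb_node p c sd sr :
  Comb (Node p c sd sr) -> sd = Leaf (stop_payoff p) /\ Comb sr.
Proof. intros [H|H]; inversion H; subst; split; unfold Comb; auto. Qed.

Lemma Comb_leaf f : ~ Comb (Leaf f).
Proof. intros [H|H]; inversion H. Qed.

Lemma Comb_SConv_Conv t : Comb t -> SConv t -> Conv t.
Proof.
  intros Hc Hs; destruct Hs as [f|p c sd sr Hcv _ _]; auto.
  exfalso; exact (Comb_leaf f Hc).
Qed.

Lemma Comb_payoff_ge0 t f a : Comb t -> Payoff t f -> 0 <= f a.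
Proof.
  intros Hc Hf; induction Hf as [f|p sd sr f Hf _|p sd sr f _ IH].
  - exfalso; exact (Comb_leaf f Hc).
  - destruct (Comb_node _ _ _ _ Hc) as [-> _].
    inversion Hf; subst; apply stop_payoff_ge0.
  - apply IH, (Comb_node _ _ _ _ Hc).
Qed.

Lemma OnSpine_Comb t s : OnSpine t s -> Comb s -> Comb t.
Proof. induction 1; auto. intros Hc; apply IHOnSpine, (Comb_node _ _ _ _ Hc). Qed.

Lemma OnSpine_SPE t s : OnSpine t s -> SPE s -> SPE t.
Proof. induction 1; eauto using SPE_node_r. Qed.

Lemma OnSpine_total t1 t2 s : OnSpine t1 s -> OnSpine t2 s -> OnSpine t2 t1 \/ OnSpine t1 t2.
Proof.
  intros H1; revert t2; induction H1 as [|p c sd sr H1 IH]; intros t2 H2; auto.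
  inversion H2; subst; [right; constructor; assumption | auto].
Qed.

Lemma StopsAt_Loses a t : Comb t -> StopsAt a t -> Loses a t.
Proof.
  destruct t as [f|p [|] sd sr]; simpl; try contradiction.
  intros Hc ->; destruct (Comb_node _ _ _ _ Hc) as [-> _].
  exists (stop_payoff a); split; [repeat constructor | apply stop_payoff_self].
Qed.

Lemma Loses_stop p sd sr a :
  Comb (Node p d sd sr) -> Loses a (Node p d sd sr) -> p = a.
Proof.
  intros Hc [f [Hf Hfa]]; destruct (Comb_node _ _ _ _ Hc) as [-> _].
  inversion Hf as [| ? ? ? ? Hleaf | ]; subst; inversion Hleaf; subst.
  now apply stop_payoff_eq0.
Qed.

(* At a stop of a, the equilibrium condition bounds a's continuation payoff by 0. *)
Lemma Loses_node_r p c sd sr a :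
  Comb (Node p c sd sr) -> SPE (Node p c sd sr) -> Loses a (Node p c sd sr) -> Loses a sr.
Proof.
  intros Hc Hs Hl; destruct c.
  - pose proof (Loses_stop _ _ _ _ Hc Hl) as ->.
    destruct (Comb_node _ _ _ _ Hc) as [-> Hcr].
    assert (Hsr : SPE sr) by exact (SPE_node_r _ _ _ _ Hs).
    destruct (conv_payoff _ (Comb_SConv_Conv _ Hcr (SPE_SConv _ Hsr))) as [f Hf].
    inversion Hs as [|? ? ? ? [_ [Hd _]] _ _]; subst.
    specialize (Hd _ _ _ eq_refl _ _ (Payoff_leaf _) Hf).
    pose proof (Comb_payoff_ge0 _ _ a Hcr Hf).
    rewrite stop_payoff_self in Hd.
    exists f; split; [exact Hf | lra].
  - destruct Hl as [f [Hf Hfa]]; inversion Hf; subst; exists f; auto.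
Qed.

Lemma OnSpine_Loses a t u : OnSpine t u -> Comb u -> SPE u -> Loses a u -> Loses a t.
Proof.
  induction 1 as [|p c sd sr _ IH]; intros Hc Hs Hl; auto.
  apply IH.
  - apply (Comb_node _ _ _ _ Hc).
  - exact (SPE_node_r _ _ _ _ Hs).
  - exact (Loses_node_r _ _ _ _ _ Hc Hs Hl).
Qed.

Lemma OnSpine_StopsAt_eq a b t u :
  Comb u -> SPE u -> StopsAt a u -> OnSpine t u -> StopsAt b t -> b = a.
Proof.
  intros Hc Hs Ha Ht Hb.
  pose proof (OnSpine_Loses a _ _ Ht Hc Hs (StopsAt_Loses _ _ Hc Ha)) as Hl.
  pose proof (OnSpine_Comb _ _ Ht Hc) as Hct.
  destruct t as [f|p [|] sd sr]; simpl in Hb; try contradiction; subst p.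
  exact (Loses_stop _ _ _ _ Hct Hl).
Qed.

Lemma at_most_one_stopper s ta tb :
  Comb s -> SPE s -> OnSpine ta s -> StopsAt A ta -> OnSpine tb s -> StopsAt B tb -> False.
Proof.
  intros Hc Hs HA SA HB SB.
  destruct (OnSpine_total _ _ _ HA HB) as [H|H].
  - discriminate (OnSpine_StopsAt_eq A B tb ta
      (OnSpine_Comb _ _ HA Hc) (OnSpine_SPE _ _ HA Hs) SA H SB).
  - discriminate (OnSpine_StopsAt_eq B A ta tb
      (OnSpine_Comb _ _ HB Hc) (OnSpine_SPE _ _ HB Hs) SB H SA).
Qed.

Lemma Continues_leaf a f : Continues a (Leaf f).
Proof. destruct a; constructor; intros; discriminate. Qed.

Lemma Conv_Continues a t :
  Conv t -> Comb t -> (forall u, OnSpine u t -> ~ StopsAt a u) -> Continues a t.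
Proof.
  induction 1 as [f|p sd sr _|p sd sr _ IH]; intros Hc Hn.
  - exfalso; exact (Comb_leaf f Hc).
  - destruct (Comb_node _ _ _ _ Hc) as [-> _].
    destruct a, p; try (exfalso; apply (Hn _ (OnSpine_refl _)); reflexivity).
    + apply AcBes_Bd.
    + apply BcAes_Ad.
  - destruct (Comb_node _ _ _ _ Hc) as [-> Hcr].
    assert (Hr : Continues a sr)
      by (apply IH; auto; intros u Hu; apply Hn; constructor; auto).
    destruct a, p; simpl in *.
    + apply AcBes_A; auto.
    + apply AcBes_Bc; auto.
    + apply BcAes_Ac; auto.
    + apply BcAes_B; auto.
Qed.

Lemma Box_Continues a s :
  Comb s -> SConv s -> (forall u, OnSpine u s -> ~ StopsAt a u) -> Box (Continues a) s.
Proof.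
  intros Hc Hs Hn.
  apply (Box_coind _ (fun t => (exists f, t = Leaf f) \/
           (Comb t /\ SConv t /\ forall u, OnSpine u t -> ~ StopsAt a u))).
  - intros t [[f ->]|[Hct [Hst Hnt]]].
    + apply Continues_leaf.
    + exact (Conv_Continues a t (Comb_SConv_Conv _ Hct Hst) Hct Hnt).
  - intros p c sd sr [[f E]|[Hct [Hst Hnt]]]; [discriminate|].
    destruct (Comb_node _ _ _ _ Hct) as [-> Hcr].
    inversion Hst; subst.
    split; [left; eauto | right; repeat split; auto].
    intros u Hu; apply Hnt; constructor; auto.
  - right; auto.
Qed.

Theorem mainTheorem11 :
  forall s : Strat, (S0 s \/ S1 s) -> SPE s -> SAcBes s \/ SBcAes s.
Proof.
  intros s Hc Hs; fold (Comb s) in Hc.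
  pose proof (SPE_SConv _ Hs) as Hsc.
  destruct (classic (exists t, OnSpine t s /\ StopsAt A t)) as [[tA [HA SA]]|NA].
  - destruct (classic (exists t, OnSpine t s /\ StopsAt B t)) as [[tB [HB SB]]|NB].
    + exfalso; exact (at_most_one_stopper s tA tB Hc Hs HA SA HB SB).
    + right; apply (Box_Continues B s Hc Hsc); intros u Hu Su; eauto.
  - left; apply (Box_Continues A s Hc Hsc); intros u Hu Su; eauto.
Qed.
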